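(* Let $G$ be a finite simple graph on the vertex set $V(G)=\{x_{11},\ldots,x_{n1}\}$. Let $m_1,\ldots,m_n\geq 2$ be integers and let $G_1,\ldots,G_n$ be connected finite simple graphs on the vertex sets $V(G_i)=\{x_{i1},\ldots,x_{im_i}\}$, where the sets $V(G_i)\setminus\{x_{i1}\}$ are pairwise disjoint and disjoint from $V(G)$. Let $G(G_1,\ldots,G_n)$ denote the graph obtained by attaching $G_i$ to $G$ at the vertex $x_{i1}$ for every $i$. Then: (i) If $G_1,\ldots,G_n$ are vertex decomposable and, for each $i$, $x_{i1}$ is a shedding vertex of $G_i$, then $G(G_1,\ldots,G_n)$ is vertex decomposable. (ii) Conversely, if $G(G_1,\ldots,G_n)$ is vertex decomposable, then $G_1,\ldots,G_n$ are vertex decomposable.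
   Context: The graph $G(G_1,\ldots,G_n)$ has vertex set $\bigcup_{i=1}^n V(G_i)$ and edge set $E(G)\cup\bigcup_{i=1}^n E(G_i)$, i.e. the vertex $x_{i1}$ of $G$ is identified with the vertex $x_{i1}$ of $G_i$. For a graph $H$ and $W\subseteq V(H)$, $H\setminus W$ is the induced subgraph on $V(H)\setminus W$; $N_H(x)$ is the set of neighbors of $x$ and $N_H[x]=N_H(x)\cup\{x\}$. A graph $H$ is vertex decomposable if it has no edges, or else it has a vertex $x$ (called a shedding vertex) such that (1) both $H\setminus N_H[x]$ and $H\setminus\{x\}$ are vertex decomposable, and (2) for every independent set $S$ of $H\setminus N_H[x]$ there is $y\in N_H(x)$ such that $S\cup\{y\}$ is independent in $H\setminus\{x\}$. (Equivalently, the independence complex of $H$ is vertex decomposable in the sense of Björner–Wachs.) Note that by this definition a shedding vertex must satisfy both conditions (1) and (2). *)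

From mathcomp Require Import all_boot.
Set Implicit Arguments. Unset Strict Implicit. Unset Printing Implicit Defensive.

(* A finite simple graph H is represented by a vertex set W : {set T} together
   with an edge relation e : rel T, of which only the restriction to W matters
   (H is the induced subgraph of e on W). *)
Section Graphs.
Variable T : finType.

Definition simple_on (e : rel T) (W : {set T}) : Prop :=
  (forall u v, u \in W -> v \in W -> e u v = e v u) /\
  (forall u, u \in W -> ~~ e u u).

Definition induced (e : rel T) (W : {set T}) : rel T :=
  [rel u v | [&& u \in W, v \in W & e u v]].

Definition connected_on (e : rel T) (W : {set T}) : Prop :=
  W != set0 /\ {in W &, forall u v, connect (induced e W) u v}.

Definition nbhd (e : rel T) (W : {set T}) (x : T) : {set T} :=
  [set y in W | (y != x) && e x y].
Definition cnbhd (e : rel T) (W : {set T}) (x : T) : {set T} :=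
  x |: nbhd e W x.

Definition indep (e : rel T) (S : {set T}) : Prop :=
  forall u v, u \in S -> v \in S -> ~~ e u v.

Definition shedding_cond (e : rel T) (W : {set T}) (x : T) : Prop :=
  forall S : {set T}, S \subset W :\: cnbhd e W x -> indep e S ->
    exists2 y, y \in nbhd e W x & (y |: S \subset W :\ x) /\ indep e (y |: S).

(* vertex decomposable graphs (independence complex version) *)
Inductive vdecomp (e : rel T) : {set T} -> Prop :=
| VD_edgeless (W : {set T}) : indep e W -> vdecomp e W
| VD_shed (W : {set T}) (x : T) : x \in W ->
    vdecomp e (W :\: cnbhd e W x) -> vdecomp e (W :\ x) ->
    shedding_cond e W x -> vdecomp e W.

Definition shedding_vertex (e : rel T) (W : {set T}) (x : T) : Prop :=
  [/\ x \in W, vdecomp e (W :\: cnbhd e W x), vdecomp e (W :\ x)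
    & shedding_cond e W x].

(* The graph G(G_1,...,G_n): G = (V, eG), G_i = (Vi i, ei i). *)
Definition attach_edge (n : nat) (eG : rel T) (V : {set T})
    (Vi : 'I_n -> {set T}) (ei : 'I_n -> rel T) : rel T :=
  [rel u v | [&& u \in V, v \in V & eG u v] ||
             [exists i, [&& u \in Vi i, v \in Vi i & ei i u v]]].
Definition attach_vertices (n : nat) (V : {set T}) (Vi : 'I_n -> {set T})
  : {set T} := V :|: \bigcup_(i < n) Vi i.

End Graphs.

(* Only the root x_i joins G_i to the rest of H = G(G_1,...,G_n).  So deleting
   x_i from H splits off G_i \ x_i, and deleting N_H[x_i] splits off
   G_i \ N[x_i] from the rest of H minus the G-neighbours of x_i; moreover the
   shedding condition for x_i in G_i lifts to H, since neighbours of x_i in G_i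
   see nothing outside G_i.  Shedding the roots one at a time thus reduces (i)
   to disjoint unions of vertex decomposable graphs.
   For (ii), choose a neighbour y_j of x_j in G_j for every j <> i.  The y_j are
   independent, and the link of an independent set in a vertex decomposable
   graph is vertex decomposable.  This link has lost every x_j with j <> i, so
   G_i is cut off from the rest of it, and a part of a vertex decomposable graph
   with no edges to its complement is vertex decomposable. *)

From mathcomp Require Import all_boot.
Set Implicit Arguments. Unset Strict Implicit. Unset Printing Implicit Defensive.

Section VertexDecomposable.
Variable T : finType.
Implicit Types (e : rel T) (A B W S : {set T}) (u v x : T).

Definition separated e A B := forall u v, u \in A -> v \in B -> ~~ e u v && ~~ e v u.

Lemma separatedS e A B A' B' :
  A' \subset A -> B' \subset B -> separated e A B -> separated e A' B'.
Proof. by move=> /subsetP sA /subsetP sB eAB u v /sA uA /sB vB; apply: eAB. Qed.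

Lemma separated_sym e A B : separated e A B -> separated e B A.
Proof. by move=> eAB u v uB vA; rewrite andbC; apply: eAB. Qed.

Lemma in_setD_cnbhd e W x u :
  (u \in W :\: cnbhd e W x) = [&& u != x, ~~ e x u & u \in W].
Proof. by rewrite !inE; case: (u \in W); case: (u == x); case: (e x u). Qed.

Lemma in_nbhd e W x u : (u \in nbhd e W x) = [&& u \in W, u != x & e x u].
Proof. by rewrite !inE. Qed.

Lemma indepS e S S' : S' \subset S -> indep e S -> indep e S'.
Proof. by move=> /subsetP sS iS u v /sS uS /sS vS; apply: iS. Qed.

Lemma indep_setU e A B : indep e A -> indep e B -> separated e A B -> indep e (A :|: B).
Proof.
move=> iA iB eAB u v; rewrite !inE => /orP[uA|uB] /orP[vA|vB].
- exact: iA.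
- by case/andP: (eAB u v uA vB).
- by case/andP: (eAB v u vA uB).
- exact: iB.
Qed.

Lemma simple_onS e W W' : W' \subset W -> simple_on e W -> simple_on e W'.
Proof. by move=> /subsetP sW [sym loop]; split=> [u v /sW uW /sW vW | u /sW]; auto. Qed.

Section EqIn.
Variables (e e' : rel T) (W : {set T}).
Hypothesis eq_ee' : {in W &, e =2 e'}.

Lemma eq_in_indep S : S \subset W -> indep e S -> indep e' S.
Proof.
by move=> /subsetP sSW iS u v uS vS; rewrite -eq_ee' ?sSW //; apply: iS.
Qed.

Lemma eq_in_nbhd x : x \in W -> nbhd e W x = nbhd e' W x.
Proof.
by move=> xW; apply/setP=> u; rewrite !in_nbhd; case uW: (u \in W); rewrite //= eq_ee'.
Qed.

Lemma eq_in_cnbhd x : x \in W -> cnbhd e W x = cnbhd e' W x.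
Proof. by move=> xW; rewrite /cnbhd eq_in_nbhd. Qed.

End EqIn.

Lemma eq_in_shedding_cond e e' W x : {in W &, e =2 e'} -> x \in W ->
  shedding_cond e W x -> shedding_cond e' W x.
Proof.
move=> eq_ee' xW shed S sS iS.
have sSW : S \subset W := subset_trans sS (subsetDl _ _).
have eq_e'e : {in W &, e' =2 e} by move=> u v uW vW; rewrite eq_ee'.
rewrite -(eq_in_cnbhd eq_ee' xW) in sS.
have iSe := eq_in_indep eq_e'e sSW iS.
have [y yN [syS iyS]] := shed S sS iSe.
exists y; first by rewrite -(eq_in_nbhd eq_ee').
split=> //; exact (eq_in_indep eq_ee' (subset_trans syS (subsetDl _ _)) iyS).
Qed.

Lemma eq_in_vdecomp e e' W : {in W &, e =2 e'} -> vdecomp e W -> vdecomp e' W.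
Proof.
move=> + vdW; elim: vdW e' => {W} [W iW | W x xW _ IHN _ IHD shed] e' eq_ee'.
  exact/VD_edgeless/(eq_in_indep eq_ee').
have eq_sub W' : W' \subset W -> {in W' &, e =2 e'} by move/subsetP/sub_in2; apply.
apply: (VD_shed xW).
- by rewrite -(eq_in_cnbhd eq_ee' xW); apply/IHN/eq_sub/subsetDl.
- exact/IHD/eq_sub/subsetDl.
- exact: eq_in_shedding_cond shed.
Qed.

Lemma eq_in_shedding_vertex e e' W x : {in W &, e =2 e'} ->
  shedding_vertex e W x -> shedding_vertex e' W x.
Proof.
move=> eq_ee' [xW vdN vdD shed].
have eq_sub W' : W' \subset W -> {in W' &, e =2 e'} by move/subsetP/sub_in2; apply.
split=> //.
- by rewrite -(eq_in_cnbhd eq_ee' xW); apply: eq_in_vdecomp vdN; apply/eq_sub/subsetDl.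
- by apply: eq_in_vdecomp vdD; apply/eq_sub/subsetDl.
- exact: eq_in_shedding_cond shed.
Qed.

Lemma setD_cnbhd_sub_setD1 e A x : A :\: cnbhd e A x \subset A :\ x.
Proof. exact/setDS/subsetUl. Qed.

Lemma nbhd_separated e A B x : x \in A -> separated e A B -> nbhd e B x = set0.
Proof.
move=> xA eAB; apply/setP=> u; rewrite in_nbhd inE.
case: (boolP (u \in B)) => //= uB.
by case/andP: (eAB x u xA uB) => /negbTE ->; rewrite andbF.
Qed.

Lemma setU_setD_cnbhd e A B x : x \in A -> [disjoint A & B] ->
  (A :|: B) :\: cnbhd e (A :|: B) x = (A :\: cnbhd e A x) :|: (B :\: nbhd e B x).
Proof.
move=> xA dAB; apply/setP=> u; rewrite in_setU !in_setD_cnbhd in_setD !in_nbhd in_setU.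
case: (boolP (u \in B)) => uB /=; last by rewrite !orbF.
have uA : u \in A = false := disjointFl dAB uB.
have ux : u != x by apply: contraFneq uA => ->.
by rewrite uA ux !andbF.
Qed.

Lemma setU_setD1 A B x : x \notin B -> (A :|: B) :\ x = (A :\ x) :|: B.
Proof.
by move=> xB; rewrite setDUl; congr (_ :|: _); apply/setDidPl; rewrite disjoint_sym disjoints1.
Qed.

Lemma vdecomp_shed_setU e A B x : x \in A -> [disjoint A & B] ->
  separated e (A :\ x) B -> shedding_cond e A x ->
  vdecomp e ((A :\: cnbhd e A x) :|: (B :\: nbhd e B x)) ->
  vdecomp e ((A :\ x) :|: B) -> vdecomp e (A :|: B).
Proof.
move=> xA dAB eAB shed vdN vdD.
have xB : x \notin B by rewrite (disjointFr dAB xA).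
apply: (VD_shed (x := x)); first by rewrite inE xA.
- by rewrite setU_setD_cnbhd.
- by rewrite setU_setD1.
move=> S sS iS.
have sSD : S \subset (A :|: B) :\ x := subset_trans sS (setD_cnbhd_sub_setD1 _ _ _).
rewrite setU_setD_cnbhd // in sS.
have sSA : S :&: A \subset A :\: cnbhd e A x.
  apply/subsetP=> u /setIP[/(subsetP sS) + uA]; rewrite inE => /orP[//|].
  by rewrite inE (disjointFr dAB uA) andbF.
have [y yN [syA iyA]] := shed _ sSA (indepS (subsetIl _ _) iS).
have yAx : y \in A :\ x by apply: (subsetP syA); rewrite setU11.
have yS : separated e [set y] S.
  move=> _ v /set1P-> vS; case: (boolP (v \in A)) => vA.
    have vyA : v \in y |: (S :&: A) by rewrite !inE vS vA orbT.
    by rewrite (iyA _ _ (setU11 _ _) vyA) (iyA _ _ vyA (setU11 _ _)).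
  apply: eAB yAx _; have /setUP[/setDP[vA' _] | /setDP[] //] := subsetP sS v vS.
  by rewrite vA' in vA.
exists y; first by move: yN; rewrite !in_nbhd inE => /and3P[-> -> ->].
split.
  by rewrite subUset sub1set sSD andbT; move: yAx; rewrite !inE => /andP[-> ->].
exact (indep_setU (indepS (subsetUl _ _) iyA) iS yS).
Qed.

Lemma vdecomp_union_indep e A B : indep e A -> [disjoint A & B] -> separated e A B ->
  vdecomp e B -> vdecomp e (A :|: B).
Proof.
move=> iA + + vdB; elim: vdB => {B} [B iB | B y yB _ IHN _ IHD shed] dAB eAB.
  exact/VD_edgeless/indep_setU.
have eBA := separated_sym eAB.
have dAB' : [disjoint A & B :\ y] := disjointWr (subsetDl _ _) dAB.
have eAB' : separated e A (B :\ y) := separatedS (subxx _) (subsetDl _ _) eAB.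
rewrite setUC; apply: (vdecomp_shed_setU yB _ _ shed); first by rewrite disjoint_sym.
- exact: separatedS (subsetDl _ _) (subxx _) eBA.
- rewrite (nbhd_separated yB eBA) setD0 setUC; apply: IHN.
  + exact: disjointWr (setD_cnbhd_sub_setD1 _ _ _) dAB'.
  + exact: separatedS (subxx _) (setD_cnbhd_sub_setD1 _ _ _) eAB'.
- by rewrite setUC; apply: IHD.
Qed.

Lemma vdecomp_union e A B : [disjoint A & B] -> separated e A B ->
  vdecomp e A -> vdecomp e B -> vdecomp e (A :|: B).
Proof.
move=> + + vdA; elim: vdA B => {A} [A iA | A x xA _ IHN _ IHD shed] B dAB eAB vdB.
  exact: vdecomp_union_indep.
have dAB' : [disjoint A :\ x & B] := disjointWl (subsetDl _ _) dAB.
have eAB' : separated e (A :\ x) B := separatedS (subsetDl _ _) (subxx _) eAB.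
apply: (vdecomp_shed_setU xA dAB eAB' shed); last exact: IHD.
rewrite (nbhd_separated xA eAB) setD0; apply: IHN => //.
- exact: disjointWl (setD_cnbhd_sub_setD1 _ _ _) dAB'.
- exact: separatedS (setD_cnbhd_sub_setD1 _ _ _) (subxx _) eAB'.
Qed.

Lemma vdecomp_glue e A B x : shedding_vertex e A x -> [disjoint A & B] ->
  separated e (A :\ x) B -> vdecomp e B -> vdecomp e (B :\: nbhd e B x) ->
  vdecomp e (A :|: B).
Proof.
move=> [xA vdN vdD shed] dAB eAB vdB vdBN.
apply: (vdecomp_shed_setU xA dAB eAB shed); apply: vdecomp_union => //.
- apply: disjointWl (setD_cnbhd_sub_setD1 _ _ _) _.
  exact: disjointWl (subsetDl _ _) (disjointWr (subsetDl _ _) dAB).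
- exact: separatedS (setD_cnbhd_sub_setD1 _ _ _) (subsetDl _ _) eAB.
- exact: disjointWl (subsetDl _ _) dAB.
Qed.

Lemma vdecomp_component e A B : [disjoint A & B] -> separated e A B ->
  vdecomp e (A :|: B) -> vdecomp e A.
Proof.
move=> dAB eAB; move defW: (A :|: B) => W vdW; symmetry in defW.
elim: vdW A B defW dAB eAB => {W} [W iW | W x xW _ IHN _ IHD shed] A B defW dAB eAB.
  by apply: VD_edgeless; apply: indepS iW; rewrite defW subsetUl.
move: (xW); rewrite defW => /setUP[xA | xB]; last first.
  apply: (IHD A (B :\ x)); last exact: separatedS (subxx _) (subsetDl _ _) eAB.
    by rewrite defW setUC setU_setD1 1?setUC // (disjointFl dAB xB).
  exact: disjointWr (subsetDl _ _) dAB.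
have xnB : x \notin B by rewrite (disjointFr dAB xA).
apply: (VD_shed xA).
- apply: (IHN _ B) => //.
  + by rewrite defW setU_setD_cnbhd // (nbhd_separated xA eAB) setD0.
  + exact: disjointWl (subsetDl _ _) dAB.
  + exact: separatedS (subsetDl _ _) (subxx _) eAB.
- apply: (IHD _ B); first by rewrite defW setU_setD1.
  + exact: disjointWl (subsetDl _ _) dAB.
  + exact: separatedS (subsetDl _ _) (subxx _) eAB.
move=> S sS iS.
have sSW : S \subset W :\: cnbhd e W x.
  by rewrite defW setU_setD_cnbhd //; apply: subset_trans sS (subsetUl _ _).
have [y yN [syW iyS]] := shed S sSW iS.
move: yN; rewrite in_nbhd => /and3P[yW yx exy].
have yA : y \in A.
  move: yW; rewrite defW => /setUP[//|yB].
  by case/andP: (eAB x y xA yB); rewrite exy.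
exists y; first by rewrite in_nbhd yA yx exy.
split=> //; rewrite subUset sub1set in_setD1 yx yA /=.
exact: subset_trans sS (setD_cnbhd_sub_setD1 _ _ _).
Qed.

Lemma setD_cnbhdC e W x v :
  (W :\: cnbhd e W x) :\: cnbhd e (W :\: cnbhd e W x) v =
  (W :\: cnbhd e W v) :\: cnbhd e (W :\: cnbhd e W v) x.
Proof.
apply/setP=> u; rewrite !in_setD_cnbhd.
by case: (u == x); case: (u == v); case: (e x u); case: (e v u).
Qed.

Lemma setD1_setD_cnbhd e W x v :
  (W :\: cnbhd e W v) :\ x = (W :\ x) :\: cnbhd e (W :\ x) v.
Proof.
apply/setP=> u; rewrite in_setD1 !in_setD_cnbhd in_setD1.
by case: (u == x); case: (u == v); case: (e v u).
Qed.

Lemma vdecomp_link e W v : simple_on e W -> vdecomp e W -> v \in W ->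
  vdecomp e (W :\: cnbhd e W v).
Proof.
move=> + vdW; elim: vdW v => {W} [W iW | W x xW vdN IHN _ IHD shed] v simW vW.
  exact/VD_edgeless/(indepS (subsetDl _ _) iW).
have [sym loop] := simW.
have simN : simple_on e (W :\: cnbhd e W x) := simple_onS (subsetDl _ _) simW.
have simD : simple_on e (W :\ x) := simple_onS (subsetDl _ _) simW.
have [-> // | vx] := eqVneq v x.
have vD : v \in W :\ x by rewrite in_setD1 vx.
case: (boolP (e x v)) => [exv | nexv].
  have xNv : x \in cnbhd e W v by rewrite !inE xW (sym v x vW xW) exv andbT orbN.
  have -> : W :\: cnbhd e W v = (W :\ x) :\: cnbhd e (W :\ x) v.
    rewrite -setD1_setD_cnbhd; apply/esym/setDidPl.
    by rewrite disjoint_sym disjoints1 in_setD xNv.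
  exact: IHD.
have vN : v \in W :\: cnbhd e W x by rewrite in_setD_cnbhd vx nexv.
have xN : x \in W :\: cnbhd e W v by rewrite in_setD_cnbhd eq_sym vx sym ?nexv.
apply: (VD_shed xN).
- by rewrite setD_cnbhdC; apply: IHN.
- by rewrite setD1_setD_cnbhd; apply: IHD.
move=> S sS iS.
have sSN : S \subset (W :\: cnbhd e W x) :\: cnbhd e (W :\: cnbhd e W x) v.
  by rewrite setD_cnbhdC.
have vS : separated e [set v] S.
  move=> _ u /set1P-> /(subsetP sSN).
  rewrite !in_setD_cnbhd => /and3P[_ nevu /and3P[_ _ uW]].
  by rewrite (sym u v uW vW) nevu.
have svS : v |: S \subset W :\: cnbhd e W x.
  by rewrite subUset sub1set vN (subset_trans sSN (subsetDl _ _)).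
have ivS : indep e (v |: S).
  apply: indep_setU vS => // u w /set1P-> /set1P->; exact: loop.
have [y yN [syW iyvS]] := shed _ svS ivS.
move: yN; rewrite in_nbhd => /and3P[yW yx exy].
have yvS : y \in y |: (v |: S) := setU11 _ _.
have vvS : v \in y |: (v |: S) by rewrite !inE eqxx orbT.
have yN : y \in W :\: cnbhd e W v.
  rewrite in_setD_cnbhd yW (iyvS _ _ vvS yvS) !andbT.
  by apply/eqP => yv; rewrite -yv exy in nexv.
exists y; first by rewrite in_nbhd yN yx exy.
split; last exact (indepS (setUS _ (subsetUr _ _)) iyvS).
by rewrite subUset sub1set in_setD1 yx yN (subset_trans sS (setD_cnbhd_sub_setD1 _ _ _)).
Qed.

Lemma setD_cnbhd_restrict e W W' x :
  W' \subset W -> W' :\: cnbhd e W x = W' :\: cnbhd e W' x.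
Proof.
move=> /subsetP sW; apply/setP=> u; rewrite !inE.
by case: (boolP (u \in W')) => [/sW -> | _]; rewrite ?andbF.
Qed.

Lemma vdecomp_link_indep e W S : simple_on e W -> vdecomp e W -> S \subset W ->
  indep e S -> vdecomp e (W :\: \bigcup_(v in S) cnbhd e W v).
Proof.
move=> simW vdW; have [m] := ubnP #|S|; elim: m S => // m IH S.
rewrite ltnS => leSm sSW iS.
have [-> | [v vS]] := set_0Vmem S; first by rewrite big_set0 setD0.
rewrite (big_setD1 _ vS) /= setUC -setDDl.
set W' := W :\: _.
have sW'W : W' \subset W := subsetDl _ _.
have vW' : v \in W'.
  rewrite in_setD (subsetP sSW v vS) andbT; apply/bigcupP => -[w].
  rewrite in_setD1 !inE => /andP[wv wS] /orP[/eqP vw | /and3P[_ _ ewv]].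
    by rewrite vw eqxx in wv.
  by have := iS w v wS vS; rewrite ewv.
rewrite setD_cnbhd_restrict //; apply: vdecomp_link vW'; first exact: simple_onS simW.
apply: IH; last exact: indepS (subsetDl _ _) iS.
- by rewrite (cardsD1 v S) vS in leSm.
- exact: subset_trans (subsetDl _ _) sSW.
Qed.

Lemma connected_nbhd e W x : simple_on e W -> connected_on e W -> 1 < #|W| ->
  x \in W -> exists y, y \in nbhd e W x.
Proof.
move=> [_ loop] [_ connW] W2 xW.
have [z] : exists z, z \in W :\ x.
  by apply/set0Pn; rewrite -card_gt0; move: W2; rewrite (cardsD1 x) xW.
rewrite in_setD1 => /andP[zx zW].
case/connectP: (connW x z xW zW) => -[/= _ zx' | w p /= /andP[exw _] _].
  by rewrite zx' eqxx in zx.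
move: exw; rewrite /induced /= => /and3P[_ wW exw].
exists w; rewrite in_nbhd wW exw andbT.
by apply: contraTneq exw => ->; exact: loop.
Qed.

End VertexDecomposable.

Section Attach.
Variables (T : finType) (n : nat) (x : 'I_n -> T) (eG : rel T)
  (Vi : 'I_n -> {set T}) (ei : 'I_n -> rel T).
Hypotheses (x_inj : injective x) (simG : simple_on eG [set x i | i : 'I_n])
  (simVi : forall i, simple_on (ei i) (Vi i)) (x_Vi : forall i, x i \in Vi i)
  (disj_tails : forall i j, i != j -> [disjoint Vi i :\ x i & Vi j :\ x j])
  (disj_tail_roots : forall i, [disjoint Vi i :\ x i & [set x j | j : 'I_n]]).

Local Notation V := [set x i | i : 'I_n].
Local Notation eH := (attach_edge eG V Vi ei).
Local Notation VH := (attach_vertices V Vi).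
Implicit Types (i j k : 'I_n) (I J : {set 'I_n}) (u v : T).

Lemma root_in_V j : x j \in V.
Proof. exact: imset_f. Qed.

Lemma tail_notin_V i u : u \in Vi i :\ x i -> u \notin V.
Proof. by move=> ut; rewrite (disjointFr (disj_tail_roots i) ut). Qed.

Lemma Vi_V_root i u : u \in Vi i -> u \in V -> u = x i.
Proof.
move=> uVi uV; apply/eqP; apply: contraTT uV => ux.
by apply: (tail_notin_V (i := i)); rewrite in_setD1 ux.
Qed.

Lemma root_in_Vi j k : x j \in Vi k -> j = k.
Proof. by move=> xVk; apply: x_inj; apply: Vi_V_root xVk (root_in_V j). Qed.

Lemma Vi_inj i j u : u \in Vi i -> u \in Vi j -> i = j.
Proof.
move=> uVi uVj; have [uV | uNV] := boolP (u \in V).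
  by apply: x_inj; rewrite -(Vi_V_root uVi uV) -(Vi_V_root uVj uV).
have tail k : u \in Vi k -> u \in Vi k :\ x k.
  by move=> uVk; rewrite in_setD1 uVk andbT; apply: contraNneq uNV => ->; apply: root_in_V.
apply/eqP; apply: contraTT (tail j uVj) => ij.
by rewrite (disjointFr (disj_tails ij) (tail i uVi)).
Qed.

Lemma attach_edgeE u v : eH u v =
  [&& u \in V, v \in V & eG u v] || [exists k, [&& u \in Vi k, v \in Vi k & ei k u v]].
Proof. by []. Qed.

Lemma attach_edge_tail i u v : u \in Vi i :\ x i -> eH u v = (v \in Vi i) && ei i u v.
Proof.
move=> ut; have /setD1P[_ uVi] := ut.
rewrite attach_edgeE (negbTE (tail_notin_V ut)) /=.
apply/existsP/andP => [[k /and3P[uVk vVk ek]] | [vVi ei_uv]].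
  by rewrite -(Vi_inj uVi uVk) in vVk ek.
by exists i; rewrite uVi vVi.
Qed.

Lemma attach_edge_tailr i u v : v \in Vi i :\ x i -> eH u v = (u \in Vi i) && ei i u v.
Proof.
move=> vt; have /setD1P[_ vVi] := vt.
rewrite attach_edgeE (negbTE (tail_notin_V vt)) andbF /=.
apply/existsP/andP => [[k /and3P[uVk vVk ek]] | [uVi ei_uv]].
  by rewrite -(Vi_inj vVi vVk) in uVk ek.
by exists i; rewrite uVi vVi.
Qed.

Lemma attach_edge_roots i j : i != j -> eH (x i) (x j) = eG (x i) (x j).
Proof.
move=> ij; rewrite attach_edgeE !root_in_V orbC /=.
case: existsP => // -[k /and3P[/root_in_Vi ik /root_in_Vi jk _]].
by rewrite ik jk eqxx in ij.
Qed.

Lemma separated_tail i : separated eH (Vi i :\ x i) (~: Vi i).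
Proof.
move=> u v ut; rewrite inE => /negbTE vNVi.
by rewrite (attach_edge_tail _ ut) (attach_edge_tailr _ ut) vNVi.
Qed.

Lemma eq_in_attach_edge i : {in Vi i &, eH =2 ei i}.
Proof.
move=> u v uVi vVi.
have [-> | ux] := eqVneq u (x i); last by rewrite (@attach_edge_tail i) ?in_setD1 ?ux ?vVi.
have [-> | vx] := eqVneq v (x i); last by rewrite (@attach_edge_tailr i) ?in_setD1 ?vx ?x_Vi.
rewrite attach_edgeE (negbTE (simG.2 _ (root_in_V i))) (negbTE ((simVi i).2 _ (x_Vi i))).
rewrite root_in_V /=; apply/negbTE/existsP => -[k /and3P[/root_in_Vi <- _]].
by apply/negP; apply: (simVi i).2 (x_Vi i).
Qed.

Lemma simple_attach : simple_on eH VH.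
Proof.
split=> [u v _ _ | u _]; rewrite !attach_edgeE.
  congr orb.
    by case: (boolP (u \in V)) => uV; case: (boolP (v \in V)) => vV //=; apply: simG.1.
  apply: eq_existsb => k.
  by case: (boolP (u \in Vi k)) => uVk; case: (boolP (v \in Vi k)) => vVk //=; apply: (simVi k).1.
rewrite negb_or; apply/andP; split.
  by case: (boolP (u \in V)) => //= uV; apply: simG.2.
by apply/existsP => -[k /and3P[uVk _]]; apply/negP; apply: (simVi k).2.
Qed.

(* For I \subset J: G restricted to the roots x_I, with G_j attached for j in I
   and the loose tails G_j \ x_j for j in J :\: I. *)
Definition attached_set (I J : {set 'I_n}) : {set T} :=
  x @: I :|: \bigcup_(j in J) (Vi j :\ x j).

Lemma attached_set_full : attached_set setT setT = VH.
Proof.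
apply/setP=> u; rewrite !inE; apply/orP/orP => -[].
- by case/imsetP=> j _ ->; left; apply: root_in_V.
- by case/bigcupP=> j _ /setD1P[_ uVj]; right; apply/bigcupP; exists j.
- by case/imsetP=> j _ ->; left; apply: imset_f.
case/bigcupP=> j _ uVj; have [-> | uxj] := eqVneq u (x j).
  by left; apply: imset_f.
by right; apply/bigcupP; exists j; rewrite ?in_setD1 ?uxj.
Qed.

Lemma attached_set_tail I J i : i \in J ->
  attached_set I J = (Vi i :\ x i) :|: attached_set I (J :\ i).
Proof. by move=> iJ; rewrite /attached_set (big_setD1 _ iJ) /= setUCA. Qed.

Lemma attached_set_root I J i : i \in I ->
  attached_set I J = x i |: attached_set (I :\ i) J.
Proof. by move=> iI; rewrite /attached_set -{1}(setD1K iI) imsetU1 setUA. Qed.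

Lemma attached_set_notin I J i : i \notin I -> i \notin J ->
  attached_set I J \subset ~: Vi i.
Proof.
move=> iNI iNJ; apply/subsetP=> u; rewrite !inE => /orP[/imsetP[j jI ->] | /bigcupP[j jJ]].
  by apply: contraNN iNI => /root_in_Vi <-.
by case/setD1P=> _ uVj; apply: contraNN iNJ => /(Vi_inj uVj) <-.
Qed.

Lemma attached_set_nbhd I J i : i \notin I -> i \notin J ->
  attached_set I J :\: nbhd eH (attached_set I J) (x i) =
  attached_set [set j in I | ~~ eG (x i) (x j)] J.
Proof.
move=> iNI iNJ; apply/setP=> u; rewrite in_setD in_nbhd.
case uP: (u \in attached_set I J); last first.
  apply/esym/negbTE; apply: contraFN uP; rewrite !inE => /orP[/imsetP[j] | ->].
    by rewrite inE => /andP[jI _] ->; rewrite imset_f.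
  by rewrite orbT.
move: uP; rewrite !inE => /orP[/imsetP[j jI ->] | ut]; rewrite /=.
  have ji : j != i by apply: contraNneq iNI => <-.
  rewrite (inj_eq x_inj) ji attach_edge_roots 1?eq_sym // (mem_imset _ _ x_inj) inE jI /=.
  have -> // : (x j \in \bigcup_(k in J) (Vi k :\ x k)) = false.
  by apply/bigcupP => -[k _ /setD1P[xjk /root_in_Vi jk]]; rewrite jk eqxx in xjk.
case/bigcupP: (ut) => k kJ ukt.
have xiNVk : x i \in Vi k = false by apply: contraNF iNJ => /root_in_Vi ->.
by rewrite (attach_edge_tailr _ ukt) xiNVk andbF ut orbT.
Qed.

Lemma vdecomp_attached_set I J :
  (forall i, shedding_vertex (ei i) (Vi i) (x i)) -> I \subset J ->
  vdecomp eH (attached_set I J).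
Proof.
move=> shed; have [m] := ubnP #|J|; elim: m I J => // m IH I J.
rewrite ltnS => leJm sIJ.
have [J0 | [i iJ]] := set_0Vmem J.
  have I0 : I = set0 by apply/eqP; rewrite -subset0 -J0.
  rewrite /attached_set I0 J0 big_set0 imset0 setU0.
  by apply: VD_edgeless => u v; rewrite inE.
have IHi I' : I' \subset J :\ i -> vdecomp eH (attached_set I' (J :\ i)).
  by apply: IH; rewrite (cardsD1 i J) iJ in leJm.
have iNJi : i \notin J :\ i by rewrite setD11.
have Ai I' : I' \subset J :\ i -> attached_set I' (J :\ i) \subset ~: Vi i.
  move=> sI'; apply: (attached_set_notin _ iNJi).
  by apply: contraNN iNJi; apply: (subsetP sI').
have shed_i : shedding_vertex eH (Vi i) (x i).
  by apply: eq_in_shedding_vertex (shed i) => u v uVi vVi; rewrite (eq_in_attach_edge uVi vVi).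
case: (boolP (i \in I)) => [iI | iNI].
  have sIJi : I :\ i \subset J :\ i by apply: setSD.
  rewrite (attached_set_root _ iI) (attached_set_tail _ iJ) setUA setD1K //.
  apply: vdecomp_glue shed_i _ _ (IHi _ sIJi) _.
  - by rewrite disjoint_sym disjoints_subset Ai.
  - exact (separatedS (subxx _) (Ai _ sIJi) (separated_tail (i := i))).
  rewrite attached_set_nbhd ?setD11 //; apply: IHi.
  by apply: subset_trans sIJi; apply/subsetP => j; rewrite inE => /andP[].
have sIJi : I \subset J :\ i by rewrite subsetD1 sIJ iNI.
rewrite (attached_set_tail _ iJ); apply: vdecomp_union (IHi _ sIJi).
- by rewrite disjoint_sym disjoints_subset (subset_trans (Ai _ sIJi)) // setCS subsetDl.
- exact: separatedS (subxx _) (Ai _ sIJi) (separated_tail (i := i)).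
- by case: shed_i.
Qed.

Lemma Vi_sub_attach j : Vi j \subset VH.
Proof. by apply: subsetU; apply/orP; right; apply: bigcup_sup. Qed.

Section Component.
Variables (y : 'I_n -> T) (i : 'I_n).
Hypothesis y_nbhd : forall j, y j \in nbhd (ei j) (Vi j) (x j).

Let Y := y @: ~: [set i].
Let W := VH :\: \bigcup_(v in Y) cnbhd eH VH v.

Let y_tail j : y j \in Vi j :\ x j.
Proof. by have := y_nbhd j; rewrite in_nbhd in_setD1 => /and3P[-> -> _]. Qed.

Let y_Vi j : y j \in Vi j.
Proof. by case/setD1P: (y_tail j). Qed.

Lemma vdecomp_link_neighbours : vdecomp eH VH -> vdecomp eH W.
Proof.
move=> vdH; apply: vdecomp_link_indep simple_attach vdH _ _.
  by apply/subsetP => _ /imsetP[j _ ->]; apply: subsetP (Vi_sub_attach j) _ (y_Vi j).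
move=> _ _ /imsetP[j _ ->] /imsetP[k _ ->]; rewrite (attach_edge_tail _ (y_tail j)).
case: (boolP (y k \in Vi j)) => //= /(Vi_inj (y_Vi k)) <-.
exact: (simVi k).2 (y_Vi k).
Qed.

Lemma Vi_sub_link : Vi i \subset W.
Proof.
apply/subsetP => u uVi; rewrite in_setD (subsetP (Vi_sub_attach i) u uVi) andbT.
apply/bigcupP => -[_ /imsetP[j ji ->]].
have uNVj : u \in Vi j = false by apply: contraTF ji => /(Vi_inj uVi) <-; rewrite !inE eqxx.
rewrite in_setU1 in_nbhd (attach_edge_tail _ (y_tail j)) uNVj !andbF orbF => /eqP uy.
by rewrite uy y_Vi in uNVj.
Qed.

(* Every root x_j with j != i lies in the closed neighbourhood of y_j, so what
   remains of W outside V_i consists of tails of the G_j, which only see V_j. *)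
Lemma separated_link : separated eH (Vi i) (W :\: Vi i).
Proof.
move=> u v uVi /setDP[/setDP[vH vNN] vNVi].
have [/imsetP[k _ vxk] | vNV] := boolP (v \in V).
  case/negP: vNN; apply/bigcupP; exists (y k).
    by rewrite imset_f // !inE; apply: contraNneq vNVi => <-; rewrite vxk.
  rewrite vxk in_setU1 in_nbhd (attach_edge_tail _ (y_tail k)) x_Vi (simVi k).1 ?x_Vi //.
  have := y_nbhd k; rewrite in_nbhd => /and3P[_ ykx ->].
  by rewrite (subsetP (Vi_sub_attach k) _ (x_Vi k)) eq_sym ykx orbT.
move: vH; rewrite /attach_vertices in_setU (negbTE vNV) => /bigcupP[k _ vVk].
have vt : v \in Vi k :\ x k.
  by rewrite in_setD1 vVk andbT; apply: contraNneq vNV => ->; apply: root_in_V.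
have uNVk : u \in ~: Vi k by rewrite inE; apply: contraNN vNVi => /(Vi_inj uVi) ->.
by rewrite andbC; apply: separated_tail vt uNVk.
Qed.

Lemma vdecomp_attach_component : vdecomp eH VH -> vdecomp (ei i) (Vi i).
Proof.
move=> /vdecomp_link_neighbours vdW.
have defW : W = Vi i :|: W :\: Vi i by rewrite -{1}(setID W (Vi i)) (setIidPr Vi_sub_link).
rewrite defW in vdW; apply: eq_in_vdecomp (eq_in_attach_edge (i := i)) _.
apply: vdecomp_component separated_link vdW.
by rewrite disjoint_sym disjoints_subset setDE subsetIr.
Qed.

End Component.

End Attach.

Theorem proposition2p3 (T : finType) (n : nat) (x : 'I_n -> T)
    (eG : rel T) (Vi : 'I_n -> {set T}) (ei : 'I_n -> rel T) :
  injective x ->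
  simple_on eG [set x i | i : 'I_n] ->
  (forall i, simple_on (ei i) (Vi i)) ->
  (forall i, x i \in Vi i) ->
  (forall i, 2 <= #|Vi i|) ->
  (forall i, connected_on (ei i) (Vi i)) ->
  (forall i j, i != j -> [disjoint Vi i :\ x i & Vi j :\ x j]) ->
  (forall i, [disjoint Vi i :\ x i & [set x j | j : 'I_n]]) ->
  let V := [set x i | i : 'I_n] in
  let eH := attach_edge eG V Vi ei in
  let VH := attach_vertices V Vi in
  ((forall i, vdecomp (ei i) (Vi i) /\ shedding_vertex (ei i) (Vi i) (x i)) ->
     vdecomp eH VH) /\
  (vdecomp eH VH -> forall i, vdecomp (ei i) (Vi i)).
Proof.
move=> x_inj simG simVi x_Vi Vi2 connVi disj_tails disj_tail_roots /=; split.
  move=> vdVi; rewrite -attached_set_full.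
  by apply: vdecomp_attached_set => // i; case: (vdVi i).
move=> vdH i.
have /fin_all_exists[y yN] : forall j, exists y, y \in nbhd (ei j) (Vi j) (x j).
  by move=> j; apply: connected_nbhd (simVi j) (connVi j) (Vi2 j) (x_Vi j).
exact: vdecomp_attach_component yN vdH.
Qed.
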